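(* $\mathcal{S}pl\leq_{K}\mathrm{tr}(\mathcal{E})$ and $\mathcal{S}pl\leq_{K}\mathcal{F}in\times\mathcal{F}in$.
   Context: For an infinite $A\subseteq\omega$, let $S(A)$ be the set of all $\sigma\in2^{<\omega}$ such that $\sigma$ is constant on $A\cap\mathrm{dom}(\sigma)$. The splitting ideal $\mathcal{S}pl$ is the ideal on $2^{<\omega}$ generated by the sets $S(A)$, $A\in[\omega]^{\omega}$. $\mathcal{E}$ is the $\sigma$-ideal on $2^\omega$ generated by closed sets of Lebesgue measure zero. $\mathrm{tr}(\mathcal{E})$ is the ideal on $2^{<\omega}$ consisting of those $A\subseteq2^{<\omega}$ such that $\{x\in2^{\omega}:x|_{n}\in A$ for infinitely many $n\}\in\mathcal{E}$. $\mathcal{F}in\times\mathcal{F}in$ is the ideal on $\omega\times\omega$ of sets $A$ such that for all but finitely many $n$ the set $\{m:(n,m)\in A\}$ is finite. For ideals $\mathcal{J}_0,\mathcal{J}_1$ on countable sets $X_0,X_1$, $\mathcal{J}_{0}\leq_{K}\mathcal{J}_{1}$ (Katětov reducibility) means there is a function $\pi:X_1\rightarrow X_0$ with $\pi^{-1}[A]\in\mathcal{J}_{1}$ for every $A\in\mathcal{J}_{0}$. *)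

From mathcomp Require Import all_boot all_algebra.
Set Implicit Arguments. Unset Strict Implicit. Unset Printing Implicit Defensive.
Import GRing.Theory Num.Theory.

Definition str := seq bool.
Definition cantor := nat -> bool.

Definition infinite_nat (A : nat -> Prop) : Prop :=
  forall n, exists m, (n <= m)%N /\ A m.

Definition S_of (A : nat -> Prop) (s : str) : Prop :=
  forall i j, A i -> A j -> (i < size s)%N -> (j < size s)%N ->
    nth false s i = nth false s j.

(* The splitting ideal: the ideal generated by the S(A), A infinite, i.e.
   subsets of finite unions of such sets. *)
Definition Spl (X : str -> Prop) : Prop :=
  exists (k : nat) (As : nat -> (nat -> Prop)),
    (forall i, (i < k)%N -> infinite_nat (As i)) /\
    (forall s, X s -> exists i, (i < k)%N /\ S_of (As i) s).

Definition prefix (x : cantor) (n : nat) : str := mkseq x n.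

Definition cylinder (s : str) (x : cantor) : Prop := prefix x (size s) = s.

(* closed in the product topology of 2^omega *)
Definition closed_cantor (C : cantor -> Prop) : Prop :=
  forall x, (forall n, exists y, C y /\ prefix y n = prefix x n) -> C x.

(* Lebesgue (fair-coin product) measure zero, via covers by cylinders:
   for every k, a countable family of cylinders covers N with total
   measure <= 2^-k. *)
Definition null_cantor (N : cantor -> Prop) : Prop :=
  forall k : nat, exists s : nat -> str,
    (forall x, N x -> exists i, cylinder (s i) x) /\
    (forall m, (\sum_(i < m) ((2%:R : rat) ^- size (s i)) <= (2%:R : rat) ^- k)%R).

(* E: sigma-ideal generated by closed null sets *)
Definition E_ideal (N : cantor -> Prop) : Prop :=
  exists Cs : nat -> (cantor -> Prop),
    (forall n, closed_cantor (Cs n) /\ null_cantor (Cs n)) /\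
    (forall x, N x -> exists n, Cs n x).

Definition trE (X : str -> Prop) : Prop :=
  E_ideal (fun x => forall n, exists m, (n <= m)%N /\ X (prefix x m)).

Definition FinFin (A : nat * nat -> Prop) : Prop :=
  exists N, forall n, (N <= n)%N -> exists M, forall m, A (n, m) -> (m < M)%N.

Definition katetov_le (X0 X1 : Type) (J0 : (X0 -> Prop) -> Prop)
  (J1 : (X1 -> Prop) -> Prop) : Prop :=
  exists pi : X1 -> X0, forall A, J0 A -> J1 (fun x => A (pi x)).

From Pilot Require Import Defs.
From mathcomp Require Import all_boot all_order all_algebra.
From mathcomp Require Import zify ring.
From Stdlib Require Import Classical.

(* For tr(E) the identity map works.  A branch x with infinitely many initial
   segments in S(A_0) u ... u S(A_(k-1)) has, by pigeonhole, infinitely many in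
   a single S(A_i), so x is constant on A_i.  The set of branches constant on an
   infinite A is closed, and it is null: forcing k+1 given points of A to carry
   the same bit leaves a set of measure 2 * 2^-(k+1).
   For Fin x Fin send (n, m) to the block string 0^n 1^m.  Once n exceeds some
   a0 in A, this string can be constant on A only if it takes the value 0 at
   the first point a1 >= n of A, i.e. only if m <= a1 - n. *)

Set Implicit Arguments.
Unset Strict Implicit.
Unset Printing Implicit Defensive.
Import Order.TTheory GRing.Theory Num.Theory.

Section GeometricSums.
Variable R : numFieldType.
Local Open Scope ring_scope.

Lemma halve_expr_inv n : 2 ^- n.+1 + 2 ^- n.+1 = 2 ^- n :> R.
Proof.
have two_n_neq0 : 2 ^+ n != 0 :> R by rewrite expf_neq0 ?pnatr_eq0.
by rewrite exprS; field.
Qed.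

Lemma sum_geometric_le a m : \sum_(i < m) 2 ^- (a + i.+1) <= 2 ^- a :> R.
Proof.
elim: m a => [|m IH] a; first by rewrite big_ord0 invr_ge0 exprn_ge0 ?ler0n.
rewrite big_ord_recl addn1 -[X in _ <= X]halve_expr_inv lerD2l.
by under eq_bigr => i _ do rewrite -addSnnS; exact: IH.
Qed.

Lemma sum_nth_le (r : seq R) m : all (fun x => 0 <= x) r ->
  \sum_(i < m) nth 0 r i <= \sum_(x <- r) x.
Proof.
elim: r m => [|x r IH] [|m] /=; rewrite ?big_ord0 ?big_nil ?big_cons //.
- by move=> _; rewrite big1 // => i; rewrite nth_nil.
- by case/andP=> x0 r0; rewrite addr_ge0 // big_seq sumr_ge0 // => y /(allP r0).
by case/andP=> _ r0; rewrite big_ord_recl lerD2l; exact: IH.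
Qed.

End GeometricSums.

Lemma not_infinite_nat A : ~ infinite_nat A -> exists n, forall m, (n <= m)%N -> ~ A m.
Proof.
move=> A_fin; apply: NNPP => no_bound; apply: A_fin => n.
apply: NNPP => none_above; apply: no_bound; exists n => m n_m A_m.
by apply: none_above; exists m.
Qed.

Lemma infinite_nat_pigeonhole k (P : nat -> nat -> Prop) :
  infinite_nat (fun m => exists i, (i < k)%N /\ P i m) ->
  exists i, (i < k)%N /\ infinite_nat (P i).
Proof.
elim: k => [|k IH] P_inf; first by have [m [_ [i []]]] := P_inf 0.
have [P_k_inf|/not_infinite_nat [n0 P_k_fin]] := classic (infinite_nat (P k)).
  by exists k.
have [|i [i_k P_i_inf]] := IH; last by exists i; split => //; exact: leqW.
move=> n; have [m [n_m [i [i_k P_i_m]]]] := P_inf (maxn n n0).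
exists m; split; first by lia.
exists i; split => //.
have [i_eq_k|i_ne_k] := eqVneq i k; last by lia.
by subst i; case: (P_k_fin m) => //; lia.
Qed.

Lemma infinite_nat_uniq_seq (A : nat -> Prop) c : infinite_nat A ->
  exists ps L, [/\ uniq ps, size ps = c & forall i, i \in ps -> A i /\ (i < L)%N].
Proof.
move=> A_inf; elim: c => [|c [ps [L [ps_uniq ps_size ps_A]]]]; first by exists [::], 0.
have [m [L_m A_m]] := A_inf L.
exists (m :: ps), m.+1; split => /=.
- by rewrite ps_uniq andbT; apply/negP => /ps_A [_]; lia.
- by rewrite ps_size.
by move=> i; rewrite inE => /predU1P [->|/ps_A [A_i i_L]]; split => //; lia.
Qed.

Lemma count_mem_iota (ps : seq nat) L : uniq ps -> (forall i, i \in ps -> (i < L)%N) ->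
  count (mem ps) (iota 0 L) = size ps.
Proof.
move=> ps_uniq ps_L; rewrite -size_filter; apply: perm_size.
apply: uniq_perm; rewrite ?filter_uniq ?iota_uniq // => i.
by rewrite mem_filter mem_iota /=; apply/andP/idP => [[]//|i_ps]; rewrite ps_L.
Qed.

Definition const_on (A : nat -> Prop) (x : cantor) : Prop :=
  forall i j, A i -> A j -> x i = x j.

Lemma nth_prefix (x : cantor) n i : (i < n)%N -> nth false (Defs.prefix x n) i = x i.
Proof. exact: nth_mkseq. Qed.

Lemma closed_const_on A : closed_cantor (const_on A).
Proof.
move=> x x_adherent i j A_i A_j.
have [y [y_const y_x]] := x_adherent (maxn i j).+1.
have [i_lt j_lt] : (i < (maxn i j).+1)%N /\ (j < (maxn i j).+1)%N by split; lia.
by rewrite -(nth_prefix x i_lt) -(nth_prefix x j_lt) -y_x !nth_prefix // (y_const i j).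
Qed.

Section NullSets.
Local Open Scope ring_scope.

Lemma null_cantor_of_finite_covers (N : cantor -> Prop) :
  (forall k, exists ws : seq str,
     (forall x, N x -> exists2 w, w \in ws & cylinder w x) /\
     \sum_(w <- ws) (2 : rat) ^- size w <= 2 ^- k) ->
  null_cantor N.
Proof.
move=> covers k; have [ws [ws_cover ws_small]] := covers k.+1.
(* Beyond the cover, pad with cylinders of total measure at most 2^-(k+1). *)
exists (fun i => nth (nseq (k.+1 + i.+1) false) ws i); split.
  by move=> x /ws_cover [w w_ws xw]; exists (index w ws); rewrite nth_index.
move=> m; rewrite -halve_expr_inv.
pose mu := [seq (2 : rat) ^- size w | w <- ws].
apply: le_trans (_ : \sum_(i < m) (nth 0 mu i + 2 ^- (k.+1 + i.+1)) <= _).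
  apply: ler_sum => i _; case: (ltnP i (size ws)) => i_ws.
    by rewrite (nth_map [::]) // (set_nth_default [::]) // lerDl invr_ge0 exprn_ge0.
  by rewrite !nth_default ?size_map // size_nseq add0r.
rewrite big_split lerD ?sum_geometric_le //.
have mu_ge0 : all (fun x => 0 <= x) mu.
  by apply/allP => _ /mapP [w _ ->]; rewrite invr_ge0 exprn_ge0.
by apply: le_trans (sum_nth_le m mu_ge0) _; rewrite big_map.
Qed.

Lemma null_cantor0 : null_cantor (fun _ => False).
Proof.
apply: null_cantor_of_finite_covers => k; exists [::].
by split=> [_ []|]; rewrite big_nil invr_ge0 exprn_ge0.
Qed.

Fixpoint pinned_strings (p : pred nat) (b : bool) (n : nat) : seq str :=
  if n is n'.+1 then
    let ws := pinned_strings p b n' in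
    if p n' then [seq rcons w b | w <- ws]
    else [seq rcons w false | w <- ws] ++ [seq rcons w true | w <- ws]
  else [:: [::]].

Lemma prefix_in_pinned_strings (p : pred nat) b n (x : cantor) :
  (forall i, (i < n)%N -> p i -> x i = b) -> Defs.prefix x n \in pinned_strings p b n.
Proof.
elim: n => [|n IH] x_pinned; first by rewrite inE.
rewrite /Defs.prefix mkseqS /=.
have x_pinned_n : Defs.prefix x n \in pinned_strings p b n.
  by apply: IH => i i_n; apply: x_pinned; exact: ltnW.
case p_n: (p n); first by rewrite (x_pinned n) //; exact: map_f.
by rewrite mem_cat; case: (x n); rewrite (map_f _ x_pinned_n) ?orbT.
Qed.

Lemma sum_pinned_strings (p : pred nat) b n :
  \sum_(w <- pinned_strings p b n) (2 : rat) ^- size w = 2 ^- count p (iota 0 n).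
Proof.
elim: n => [|n IH]; first by rewrite big_seq1 invr1.
have sum_rcons c : \sum_(w <- [seq rcons w c | w <- pinned_strings p b n]) (2 : rat) ^- size w
                   = 2 ^- count p (iota 0 n) / 2.
  rewrite big_map -IH mulr_suml; apply: eq_bigr => w _.
  by rewrite size_rcons exprSr invfM.
rewrite -[n.+1 in RHS]addn1 iotaD count_cat /= addn0.
case: ifP => _; rewrite ?big_cat /= !sum_rcons.
  by rewrite addn1 exprSr invfM.
by rewrite addn0 -splitr.
Qed.

Lemma null_const_on A : infinite_nat A -> null_cantor (const_on A).
Proof.
move=> A_inf; apply: null_cantor_of_finite_covers => k.
have [ps [L [ps_uniq ps_size ps_A]]] := infinite_nat_uniq_seq k.+1 A_inf.
pose ws b := pinned_strings (mem ps) b L.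
exists (ws false ++ ws true); split.
  move=> x x_const; exists (Defs.prefix x L); last by rewrite /cylinder size_mkseq.
  have [a a_ps] : exists a, a \in ps.
    by move: ps_size; case: (ps) => // a ? _; exists a; exact: mem_head.
  have : Defs.prefix x L \in ws (x a).
    apply: prefix_in_pinned_strings => i _ i_ps.
    by apply: x_const; [case: (ps_A i) | case: (ps_A a)].
  by rewrite mem_cat; case: (x a) => ->; rewrite ?orbT.
rewrite big_cat /= !sum_pinned_strings count_mem_iota => [|//|i /ps_A []//].
by rewrite ps_size halve_expr_inv.
Qed.

End NullSets.

Lemma const_on_of_infinitely_many_S_of A (x : cantor) :
  infinite_nat (fun m => S_of A (Defs.prefix x m)) -> const_on A x.
Proof.
move=> S_inf i j A_i A_j.
have [m [ij_m x_m_S]] := S_inf (maxn i j).+1.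
have [i_m j_m] : (i < m)%N /\ (j < m)%N by split; lia.
by rewrite -(nth_prefix x i_m) -(nth_prefix x j_m); apply: x_m_S; rewrite ?size_mkseq.
Qed.

Lemma E_ideal_of_finite_cover k (C : nat -> cantor -> Prop) (N : cantor -> Prop) :
  (forall i, (i < k)%N -> closed_cantor (C i) /\ null_cantor (C i)) ->
  (forall x, N x -> exists i, (i < k)%N /\ C i x) ->
  E_ideal N.
Proof.
move=> C_closed_null N_cover.
exists (fun i => if (i < k)%N then C i else fun _ => False); split.
  move=> i; case: ifP => [/C_closed_null //|_]; split; last exact: null_cantor0.
  by move=> x /(_ 0) [? []].
by move=> x /N_cover [i [i_k C_i_x]]; exists i; rewrite i_k.
Qed.

Lemma katetov_le_Spl_trE : katetov_le Spl trE.
Proof.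
exists id => X [k [As [As_inf X_cover]]].
apply: (@E_ideal_of_finite_cover k (fun i => const_on (As i))).
  by move=> i i_k; split; [exact: closed_const_on | exact/null_const_on/As_inf].
move=> x X_inf.
have [|i [i_k S_i_inf]] :=
  @infinite_nat_pigeonhole k (fun i m => S_of (As i) (Defs.prefix x m)).
  by move=> n; have [m [n_m /X_cover]] := X_inf n; exists m.
by exists i; split=> //; exact: const_on_of_infinitely_many_S_of.
Qed.

Lemma FinFin_sub (A B : nat * nat -> Prop) : FinFin B -> (forall x, A x -> B x) -> FinFin A.
Proof.
move=> [N B_fin] AB; exists N => n N_n; have [M B_n] := B_fin n N_n.
by exists M => m /AB /B_n.
Qed.

Lemma FinFin_finite_union k (B : nat -> nat * nat -> Prop) :
  (forall i, (i < k)%N -> FinFin (B i)) -> FinFin (fun x => exists i, (i < k)%N /\ B i x).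
Proof.
elim: k => [|k IH] B_fin; first by exists 0 => n _; exists 0 => m [i []].
have [N1 B_lt_k] := IH (fun i i_k => B_fin i (leqW i_k)).
have [N2 B_k] := B_fin k (ltnSn k).
exists (maxn N1 N2) => n N_n.
have [|M1 M1_bound] := B_lt_k n; first by lia.
have [|M2 M2_bound] := B_k n; first by lia.
exists (maxn M1 M2) => m [i [i_k B_i_nm]].
have [i_eq_k|i_ne_k] := eqVneq i k.
  by subst i; have := M2_bound m B_i_nm; lia.
have i_lt_k : (i < k)%N by lia.
by have := M1_bound m (ex_intro _ i (conj i_lt_k B_i_nm)); lia.
Qed.

Definition block (nm : nat * nat) : str := nseq nm.1 false ++ nseq nm.2 true.

Lemma nth_block n m i : (i < n + m)%N -> nth false (block (n, m)) i = (n <= i)%N.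
Proof.
move=> i_lt; rewrite /block nth_cat size_nseq !nth_nseq.
by case: ltnP => //= n_i; rewrite ifT //; lia.
Qed.

Lemma FinFin_S_of_block A : infinite_nat A -> FinFin (fun nm => S_of A (block nm)).
Proof.
move=> A_inf; have [a0 [_ A_a0]] := A_inf 0.
exists a0.+1 => n a0_n; have [a1 [n_a1 A_a1]] := A_inf n.
exists (a1 - n).+1 => m S_nm; rewrite ltnS leqNgt; apply/negP => lt_m.
have size_block : size (block (n, m)) = n + m by rewrite size_cat !size_nseq.
have [a0_lt a1_lt] : (a0 < n + m)%N /\ (a1 < n + m)%N by split; lia.
have := S_nm a0 a1 A_a0 A_a1; rewrite size_block !nth_block // => /(_ a0_lt a1_lt).
by rewrite leqNgt a0_n n_a1.
Qed.

Lemma katetov_le_Spl_FinFin : katetov_le Spl FinFin.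
Proof.
exists block => X [k [As [As_inf X_cover]]].
apply: (FinFin_sub _ (fun nm => X_cover (block nm))).
exact: FinFin_finite_union (fun i i_k => FinFin_S_of_block (As_inf i i_k)).
Qed.

Theorem mainTheorem6 : katetov_le Spl trE /\ katetov_le Spl FinFin.
Proof. exact: conj katetov_le_Spl_trE katetov_le_Spl_FinFin. Qed.
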